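(* Let $H$ be the graph consisting of two triangles $uv_1v_2$ and $uw_1w_2$ sharing exactly the vertex $u$. Let $G$ be a graph with $n$ vertices obtained from $H$ by attaching pendant edges (new leaves) to vertices of $H$, such that $a\ge1$ pendant edges are attached to $u$ and the remaining pendant edges are attached to exactly $d$ of the vertices $v_1,v_2,w_1,w_2$, where $1\le d\le 4$. Then $\operatorname{avm}(G)>\operatorname{avm}(R_n(3,3))$.
   Context: $\operatorname{avm}(G)$ is the average of $|M|$ over all maximal matchings $M$ of $G$ (a matching is maximal if not properly contained in another matching). For $n\ge 6$, $R_n(3,3)$ is the graph obtained from $H$ by attaching $n-5$ pendant edges (new leaves) to $v_1$. *)

From mathcomp Require Import all_boot all_order all_algebra.
Set Implicit Arguments. Unset Strict Implicit. Unset Printing Implicit Defensive.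
Import Order.TTheory GRing.Theory Num.Theory.

Section Matchings.
Variables (T : finType) (e : rel T).

Definition edges : {set {set T}} :=
  [set E | [exists x, exists y, e x y && (E == [set x; y])]].

Definition is_matching (M : {set {set T}}) : bool :=
  (M \subset edges) &&
  [forall E1 in M, forall E2 in M, (E1 != E2) ==> [disjoint E1 & E2]].

Definition is_maximal_matching (M : {set {set T}}) : bool :=
  is_matching M && ~~ [exists M' : {set {set T}}, is_matching M' && (M \proper M')].

Definition maximal_matchings : {set {set {set T}}} :=
  [set M | is_maximal_matching M].

Definition avm : rat :=
  ((\sum_(M in maximal_matchings) #|M|)%:R / (#|maximal_matchings|)%:R)%R.
End Matchings.

(* ---------- The graph H (two triangles u v1 v2, u w1 w2) with pendant leaves ----------
   Core vertices are 'I_5 : 0 = u, 1 = v1, 2 = v2, 3 = w1, 4 = w2.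
   k i = number of pendant leaves attached to core vertex i. *)
Definition PV (k : 'I_5 -> nat) : finType :=
  ('I_5 + {i : 'I_5 & 'I_(k i)})%type.

Definition H_adj (i j : 'I_5) : bool :=
  (i != j) &&
  (((val i \in [:: 0; 1; 2]) && (val j \in [:: 0; 1; 2])) ||
   ((val i \in [:: 0; 3; 4]) && (val j \in [:: 0; 3; 4]))).

Definition pend_rel (k : 'I_5 -> nat) : rel (PV k) :=
  fun x y =>
    match x, y with
    | inl i, inl j => H_adj i j
    | inl i, inr l => tag l == i
    | inr l, inl i => tag l == i
    | inr _, inr _ => false
    end.

Definition leafcount (a b1 b2 c1 c2 : nat) : 'I_5 -> nat :=
  fun i => nth 0%N [:: a; b1; b2; c1; c2] (val i).

Definition R33 (n : nat) := leafcount 0 (n - 5) 0 0 0.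

From mathcomp Require Import all_boot all_order all_algebra ring zify.
Import Order.TTheory GRing.Theory Num.Theory.
Set Implicit Arguments. Unset Strict Implicit. Unset Printing Implicit Defensive.

(* A maximal matching of a graph obtained from H by attaching leaves is
   determined by the partner of each of the five core vertices. Its core edges
   form a matching C of H, each vertex outside C that carries leaves is matched
   to one of them, and maximality says exactly that every edge of H has an end
   that lies in C or carries leaves. Summing over the twelve matchings of H
   gives the number N of maximal matchings and their total size S. For
   R_n(3,3) these are N = 3m + 4 and S = 7m + 8 with m = n - 5, so avm < 7/3.
   For G, grouping the maximal matchings by the partner of u gives closed
   formulas with 7 N < 3 S, so avm(G) > 7/3. *)

Lemma disjointP (T : finType) (A B : {set T}) :
  reflect (forall x, x \in A -> x \in B -> False) [disjoint A & B].
Proof.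
rewrite disjoint_subset; apply: (iffP subsetP) => H x xA.
  by move=> xB; have := H x xA; rewrite inE xB.
by rewrite inE; apply/negP => xB; apply: H xA xB.
Qed.

Lemma set2_eq_cases (T : finType) (a b c d : T) : [set a; b] = [set c; d] ->
  (a = c /\ b = d) \/ (a = d /\ b = c).
Proof.
move=> E.
have /set2P a_cd : a \in [set c; d] by rewrite -E set21.
have /set2P b_cd : b \in [set c; d] by rewrite -E set22.
have /set2P c_ab : c \in [set a; b] by rewrite E set21.
have /set2P d_ab : d \in [set a; b] by rewrite E set22.
by case: a_cd b_cd c_ab d_ab => -> [] -> [] ? [] ?; subst; auto.
Qed.

Lemma H_adj_irr i : H_adj i i = false.
Proof. by rewrite /H_adj eqxx. Qed.

Lemma H_adj_sym i j : H_adj i j = H_adj j i.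
Proof.
rewrite /H_adj eq_sym; congr (_ && _).
by rewrite (andbC (val i \in _)) (andbC (val i \in [:: 0; 3; 4])).
Qed.

Section PendantGraph.
Variable k : 'I_5 -> nat.
Local Notation T := (PV k).
Local Notation e := (@pend_rel k).
Implicit Types (f : {ffun 'I_5 -> option T}) (M : {set {set T}}).

Lemma pend_rel_sym : symmetric e.
Proof. by case=> [i|l] [j|m] //=; rewrite H_adj_sym. Qed.

Lemma pend_rel_irr x : e x x = false.
Proof. by case: x => [i|l] //=; rewrite H_adj_irr. Qed.

Lemma leaf_count_gt0 (l : {i : 'I_5 & 'I_(k i)}) : 0 < k (tag l).
Proof. exact: leq_ltn_trans (leq0n _) (ltn_ord (tagged l)). Qed.

Lemma edgesP (E : {set T}) :
  reflect (exists x y, e x y /\ E = [set x; y]) (E \in edges e).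
Proof.
rewrite inE; apply: (iffP existsP) => [[x /existsP[y /andP[exy /eqP ->]]]|[x [y [exy ->]]]].
  by exists x, y.
by exists x; apply/existsP; exists y; rewrite exy eqxx.
Qed.

Lemma is_matchingP M :
  reflect (M \subset edges e /\
           forall E1 E2, E1 \in M -> E2 \in M -> E1 != E2 -> [disjoint E1 & E2])
          (is_matching e M).
Proof.
apply: (iffP andP) => [[sM /forall_inP dM]|[sM dM]]; split => //.
  by move=> E1 E2 /dM /forall_inP dE1 /dE1 /implyP.
by apply/forall_inP => E1 h1; apply/forall_inP => E2 h2; apply/implyP; apply: dM.
Qed.

(* [f x] is the partner of the core vertex [x], if any; the last two clauses
   encode maximality. *)
Definition is_partner_fun f : Prop :=
  [/\ forall x j, f x = Some (inl j) -> H_adj x j /\ f j = Some (inl x),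
      forall x l, f x = Some (inr l) -> tag l = x,
      forall x, f x = None -> k x = 0 &
      forall i j, H_adj i j -> f i != None \/ f j != None].

Definition partner_of M : {ffun 'I_5 -> option T} :=
  [ffun x => [pick y | [set inl x; y] \in M]].

(* Each core edge is produced only at its smaller end, so that distinct
   vertices selected by [owns_partner] give distinct edges. *)
Definition owns (x : 'I_5) (y : T) : bool := if y is inl j then x < j else true.

Definition owns_partner f (x : 'I_5) : bool :=
  if f x is Some y then owns x y else false.

Definition matching_of f : {set {set T}} :=
  [set [set inl x; odflt (inl x) (f x)] | x in owns_partner f].

Lemma mem_matching_ofP f E :
  reflect (exists x y, [/\ f x = Some y, owns x y & E = [set inl x; y]])
          (E \in matching_of f).
Proof.
apply: (iffP imsetP) => [[x]|[x [y [fx oxy ->]]]].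
  by rewrite unfold_in /owns_partner; case fx: (f x) => [y|] // oxy ->; exists x, y.
by exists x; rewrite ?unfold_in /owns_partner ?fx.
Qed.

Section PartnerFunction.
Variable f : {ffun 'I_5 -> option T}.
Hypothesis pf : is_partner_fun f.

Lemma partner_edge_in x y : f x = Some y -> [set inl x; y] \in matching_of f.
Proof.
case: pf => core_f _ _ _ fx; apply/mem_matching_ofP.
case: y fx => [j|l] fx; last by exists x, (inr l).
have [adj fj] := core_f _ _ fx.
case: (ltngtP x j) => xj.
- by exists x, (inl j).
- by exists j, (inl x); rewrite setUC.
- by move: adj; rewrite (val_inj xj) H_adj_irr.
Qed.

Lemma matching_of_core E x : E \in matching_of f -> inl x \in E ->
  exists y, f x = Some y /\ E = [set inl x; y].
Proof.
move=> /mem_matching_ofP[z [w [fz _ ->]]] /set2P[[->]|xw]; first by exists w.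
case: pf => core_f _ _ _; subst w; have [_ fx] := core_f _ _ fz.
by exists (inl z); rewrite setUC.
Qed.

Lemma matching_of_leaf E l : E \in matching_of f -> inr l \in E ->
  f (tag l) = Some (inr l) /\ E = [set inl (tag l); inr l].
Proof.
move=> /mem_matching_ofP[z [w [fz _ ->]]] /set2P[//|lw]; subst w.
by case: pf => _ leaf_f _ _; rewrite (leaf_f _ _ fz).
Qed.

Lemma matching_of_is_matching : is_matching e (matching_of f).
Proof.
apply/is_matchingP; split.
  apply/subsetP => E /mem_matching_ofP[x [y [fx _ ->]]]; apply/edgesP.
  exists (inl x), y; split=> //; case: pf => core_f leaf_f _ _.
  by case: y fx => [j /core_f[]|l /leaf_f /= ->].
move=> E1 E2 h1 h2 E12; apply/disjointP => v v1 v2; apply: (negP E12).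
case: v v1 v2 => [x|l] v1 v2.
  have [y1 [f1 ->]] := matching_of_core h1 v1.
  have [y2 [f2 ->]] := matching_of_core h2 v2.
  by rewrite f1 in f2; case: f2 => ->.
by have [_ ->] := matching_of_leaf h1 v1; have [_ ->] := matching_of_leaf h2 v2.
Qed.

Lemma matching_of_covers x : f x != None ->
  exists2 E, E \in matching_of f & inl x \in E.
Proof.
case fx: (f x) => [y|] // _; exists [set inl x; y]; last exact: set21.
exact: partner_edge_in.
Qed.

Lemma matching_of_meets E : E \in edges e ->
  exists2 E', E' \in matching_of f & exists2 v, v \in E & v \in E'.
Proof.
case: pf => _ _ leafless_f edge_f.
have leaf_end (l : {i : 'I_5 & 'I_(k i)}) : f (tag l) != None.
  by apply/eqP => /leafless_f kl; have := leaf_count_gt0 l; rewrite kl.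
move=> /edgesP[[i|l] [[j|m] [/= epq ->]]] //.
- case: (edge_f _ _ epq) => /matching_of_covers[E' h1 h2]; exists E' => //.
    by exists (inl i); rewrite ?set21.
  by exists (inl j); rewrite ?set22.
- have [E' h1 h2] := matching_of_covers (leaf_end m); exists E' => //.
  by exists (inl i); rewrite ?set21 // -(eqP epq).
- have [E' h1 h2] := matching_of_covers (leaf_end l); exists E' => //.
  by exists (inl j); rewrite ?set22 // -(eqP epq).
Qed.

Lemma matching_of_maximal : is_maximal_matching e (matching_of f).
Proof.
rewrite /is_maximal_matching matching_of_is_matching /=.
apply/existsP => [[M' /andP[/is_matchingP[sM' dM'] /properP[sub [E EM' nE]]]]].
have [E' E'f [v vE vE']] := matching_of_meets (subsetP sM' _ EM').
have EE' : E != E' by apply: contraNneq nE => ->.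
by move/disjointP: (dM' E E' EM' (subsetP sub _ E'f) EE') => /(_ v vE vE').
Qed.

Lemma matching_ofK : partner_of (matching_of f) = f.
Proof.
apply/ffunP => x; rewrite ffunE; case: pickP => [y /= xyM|noM].
  have [y' [fx /set2_eq_cases[[_ ->]|[xy' _]]]] := matching_of_core xyM (set21 _ _) => //.
  by case: pf => core_f _ _ _; subst y'; have [] := core_f _ _ fx; rewrite H_adj_irr.
by case fx: (f x) => [y|] //; have := noM y; rewrite /= partner_edge_in.
Qed.

End PartnerFunction.

Section MaximalMatching.
Variable M : {set {set T}}.
Hypothesis maxM : is_maximal_matching e M.

Let matchM : is_matching e M. Proof. by case/andP: maxM. Qed.

Lemma maximal_edge E : E \in M -> exists p q, e p q /\ E = [set p; q].
Proof. by case/is_matchingP: matchM => /subsetP sM _ /sM /edgesP. Qed.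

Lemma maximal_edge_rel p q : [set p; q] \in M -> e p q.
Proof.
by case/maximal_edge => x [y [exy /set2_eq_cases[[-> ->]|[-> ->]]]]; rewrite // pend_rel_sym.
Qed.

Lemma partner_of_edge x y : partner_of M x = Some y -> [set inl x; y] \in M.
Proof. by rewrite ffunE; case: pickP => // y' xyM [<-]. Qed.

Lemma partner_ofE x y : [set inl x; y] \in M -> partner_of M x = Some y.
Proof.
move=> xyM; rewrite ffunE; case: pickP => [y' xy'M|noM]; last by rewrite noM in xyM.
have [/eqP/set2_eq_cases[[_ ->] //|[xy _]]|neq] := boolP ([set inl x; y'] == [set inl x; y]).
  by have := maximal_edge_rel xyM; rewrite -xy pend_rel_irr.
case/is_matchingP: matchM => _ /(_ _ _ xy'M xyM neq) /disjointP /(_ (inl x)).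
by rewrite !set21 => /(_ isT isT).
Qed.

Lemma partner_of_core E x : E \in M -> inl x \in E -> partner_of M x != None.
Proof.
move=> EM; have [p [q [_ Epq]]] := maximal_edge EM; subst E.
case/set2P => ?; subst; first by rewrite (partner_ofE EM).
by rewrite setUC in EM; rewrite (partner_ofE EM).
Qed.

Lemma partner_of_leaf E l : E \in M -> inr l \in E -> partner_of M (tag l) != None.
Proof.
move=> EM; have [p [q [epq Epq]]] := maximal_edge EM; subst E.
case/set2P => ?; subst.
  case: q epq EM => [i|m] //= /eqP <- EM.
  by rewrite setUC in EM; rewrite (partner_ofE EM).
by case: p epq EM => [i|m] //= /eqP <- EM; rewrite (partner_ofE EM).
Qed.

Lemma maximal_no_free_edge E : E \in edges e ->
  (forall v, v \in E -> forall E', E' \in M -> v \in E' -> False) -> False.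
Proof.
move=> Ee free.
have EnM : E \notin M.
  apply/negP => EM; case/edgesP: Ee => p [q [_ Epq]].
  by apply: (free p) EM _; rewrite Epq set21.
case/andP: maxM => _ /negP; apply; apply/existsP; exists (E |: M).
apply/andP; split; last by apply/properP; split; [exact: subsetUr | exists E; rewrite ?setU11].
apply/is_matchingP; split.
  by rewrite subUset sub1set Ee; case/is_matchingP: matchM.
case/is_matchingP: matchM => _ dM E1 E2 /setU1P[->|h1] /setU1P[->|h2] E12.
- by rewrite eqxx in E12.
- by apply/disjointP => v v1 v2; apply: (free v v1 E2).
- by apply/disjointP => v v1 v2; apply: (free v v2 E1).
- exact: dM.
Qed.

Lemma partner_of_partner_fun : is_partner_fun (partner_of M).
Proof.
split.
- move=> x j /partner_of_edge xjM; split; first exact: (maximal_edge_rel xjM).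
  by rewrite setUC in xjM; rewrite (partner_ofE xjM).
- by move=> x l /partner_of_edge /maximal_edge_rel /eqP.
- move=> x px; case: (posnP (k x)) => // kx; exfalso.
  pose l := Tagged (fun i => 'I_(k i)) (Ordinal kx : 'I_(k x)).
  apply: (@maximal_no_free_edge [set inl x; inr l]).
    by apply/edgesP; exists (inl x), (inr l); split => /=.
  move=> v /set2P[->|->] E' E'M vE'.
    by have := partner_of_core E'M vE'; rewrite px.
  by have := partner_of_leaf E'M vE'; rewrite /= px.
- move=> i j adj.
  case pi: (partner_of M i) => [y|]; first by left.
  case pj: (partner_of M j) => [y|]; first by right.
  exfalso; apply: (@maximal_no_free_edge [set inl i; inl j]).
    by apply/edgesP; exists (inl i), (inl j); split => /=.
  move=> v /set2P[->|->] E' E'M vE'.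
    by have := partner_of_core E'M vE'; rewrite pi.
  by have := partner_of_core E'M vE'; rewrite pj.
Qed.

Lemma partner_ofK : matching_of (partner_of M) = M.
Proof.
have pf := partner_of_partner_fun.
apply/setP => E; apply/idP/idP.
  by case/mem_matching_ofP => x [y [px _ ->]]; apply: partner_of_edge.
move=> EM; have [p [q [epq Epq]]] := maximal_edge EM; subst E.
case: p epq EM => [i|l] epq EM; first exact: (partner_edge_in pf (partner_ofE EM)).
case: q epq EM => [j|m] //= _; rewrite setUC => EM.
exact: (partner_edge_in pf (partner_ofE EM)).
Qed.

End MaximalMatching.
End PendantGraph.

Definition core_vertices : seq 'I_5 :=
  [:: @Ordinal 5 0 isT; @Ordinal 5 1 isT; @Ordinal 5 2 isT; @Ordinal 5 3 isT;
      @Ordinal 5 4 isT].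

Lemma mem_core_vertices (x : 'I_5) : x \in core_vertices.
Proof. by case: x => [[|[|[|[|[|m]]]]] Hm] //; apply/eqP. Qed.

Lemma all_core_verticesP (P : pred 'I_5) : reflect (forall x, P x) (all P core_vertices).
Proof. by apply: (iffP allP) => P_ x //; apply: P_; apply: mem_core_vertices. Qed.

Lemma big_core_vertices (R : Type) (idx : R) (op : Monoid.com_law idx) (F : 'I_5 -> R) :
  \big[op/idx]_(x : 'I_5) F x = \big[op/idx]_(x <- core_vertices) F x.
Proof.
apply/perm_big/uniq_perm => //; first exact: index_enum_uniq.
by move=> x; rewrite mem_index_enum mem_core_vertices.
Qed.

Definition is_core_matching (h : 'I_5 -> option 'I_5) : bool :=
  all (fun x => all (fun j => (h x == Some j) ==> H_adj x j && (h j == Some x))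
    core_vertices) core_vertices.

Section Counting.
Variable k : 'I_5 -> nat.
Local Notation T := (PV k).
Local Notation e := (@pend_rel k).
Implicit Types (f : {ffun 'I_5 -> option T}) (h : 'I_5 -> option 'I_5).

(* The maximality condition on a matching [h] of [H]. *)
Definition admissible h : bool :=
  all (fun i => all (fun j => H_adj i j ==>
     [|| h i != None, 0 < k i, h j != None | 0 < k j]) core_vertices) core_vertices.

Definition partner_choice h (x : 'I_5) : pred (option T) := fun o =>
  match h x, o with
  | Some j, _ => o == Some (inl j)
  | None, None => k x == 0
  | None, Some (inl _) => false
  | None, Some (inr l) => tag l == x
  end.

Definition extends h f : bool := all (fun x => partner_choice h x (f x)) core_vertices.

Definition core_part f : {ffun 'I_5 -> option 'I_5} :=
  [ffun x => if f x is Some (inl j) then Some j else None].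

Definition is_partner_funb f : bool :=
  [&& is_core_matching (core_part f), admissible (core_part f) & extends (core_part f) f].

Lemma is_partner_funP f : reflect (is_partner_fun f) (is_partner_funb f).
Proof.
apply: (iffP and3P) => [[/all_core_verticesP cm /all_core_verticesP adm
                         /all_core_verticesP ext]|[core_f leaf_f leafless_f edge_f]].
  split.
  - move=> x j fx; have px : core_part f x = Some j by rewrite ffunE fx.
    move/all_core_verticesP: (cm x) => /(_ j); rewrite px eqxx => /andP[adj /eqP pj].
    by split=> //; move: pj; rewrite ffunE; case: (f j) => [[i|l]|] //= [->].
  - by move=> x l fx; have := ext x; rewrite /partner_choice ffunE fx => /eqP.
  - by move=> x fx; have := ext x; rewrite /partner_choice ffunE fx => /eqP.
  - move=> i j adj; move/all_core_verticesP: (adm i) => /(_ j); rewrite adj /=.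
    have matched z : (core_part f z != None) || (0 < k z) -> f z != None.
      case/orP; first by rewrite ffunE; case: (f z).
      apply: contraTneq => fz; have := ext z.
      by rewrite /partner_choice ffunE fz => /eqP ->.
    by case/or4P => h; [left|left|right|right]; apply: matched; rewrite h ?orbT.
split.
- apply/all_core_verticesP => x; apply/all_core_verticesP => j; apply/implyP.
  rewrite ffunE; case fx: (f x) => [[i|l]|] //= /eqP[<-].
  by have [adj fi] := core_f _ _ fx; rewrite adj ffunE fi eqxx.
- apply/all_core_verticesP => i; apply/all_core_verticesP => j; apply/implyP => adj.
  have matched z : f z != None -> (core_part f z != None) || (0 < k z).
    rewrite ffunE; case fz: (f z) => [[m|l]|] //= _.
    by rewrite -(leaf_f _ _ fz) leaf_count_gt0.
  by case: (edge_f _ _ adj) => /matched /orP[] ->; rewrite ?orbT.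
- apply/all_core_verticesP => x; rewrite /partner_choice ffunE.
  case fx: (f x) => [[j|l]|] /=; first by rewrite eqxx.
    by rewrite (leaf_f _ _ fx).
  by rewrite (leafless_f _ fx).
Qed.

Definition partner_funs := [set f | is_partner_funb f].

Lemma matching_of_inj : {in partner_funs &, injective (@matching_of k)}.
Proof.
move=> f1 f2; rewrite !inE => /is_partner_funP pf1 /is_partner_funP pf2 E.
by rewrite -(matching_ofK pf1) -(matching_ofK pf2) E.
Qed.

Lemma maximal_matchingsE : maximal_matchings e = @matching_of k @: partner_funs.
Proof.
apply/setP => M; rewrite inE; apply/idP/imsetP => [maxM|[f]].
  exists (partner_of M); last by rewrite partner_ofK.
  by rewrite inE; apply/is_partner_funP; apply: partner_of_partner_fun.
by rewrite inE => /is_partner_funP pf ->; apply: matching_of_maximal.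
Qed.

(* Each edge of an extension of [h] is counted once: a core edge at its
   smaller end, a leaf edge at its core end. *)
Definition contributes h (x : 'I_5) : bool :=
  if h x is Some j then x < j else 0 < k x.

Definition leaf_weight h (x : 'I_5) : nat :=
  if h x is Some _ then 1 else maxn (k x) 1.

Definition extension_size h : nat := \sum_(x <- core_vertices) contributes h x.

Definition extension_count h : nat := \prod_(x <- core_vertices) leaf_weight h x.

Lemma card_matching_of f :
  is_partner_funb f -> #|matching_of f| = extension_size (core_part f).
Proof.
move/is_partner_funP => pf; case: (pf) => _ leaf_f leafless_f _.
rewrite card_in_imset; last first.
  move=> x1 x2; rewrite !unfold_in /owns_partner.
  case f1: (f x1) => [y1|] // o1; case f2: (f x2) => [y2|] // o2 /=.
  case/set2_eq_cases => [[[] //]|[E1 E2]]; subst; rewrite /owns in o1 o2.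
  by have := ltn_trans o1 o2; rewrite ltnn.
rewrite -sum1_card big_mkcond /= big_core_vertices; apply: eq_bigr => x _.
rewrite unfold_in /owns_partner /contributes ffunE; case fx: (f x) => [[j|l]|] //=.
  by rewrite -(leaf_f _ _ fx) leaf_count_gt0.
by rewrite leafless_f.
Qed.

Lemma card_partner_choice h x : #|partner_choice h x| = leaf_weight h x.
Proof.
rewrite /leaf_weight; case hx: (h x) => [j|].
  by apply: (@eq_card1 _ (Some (inl j))) => o; rewrite unfold_in /partner_choice hx inE.
have [kx0|kx_gt0] := posnP (k x).
  rewrite kx0; apply: (@eq_card1 _ None) => o; rewrite unfold_in /partner_choice hx inE.
  case: o => [[i|l]|] //=; last by rewrite kx0.
  by apply/negbTE/eqP => tl; have := leaf_count_gt0 l; rewrite tl kx0.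
pose leaf (i : 'I_(k x)) : option T := Some (inr (Tagged (fun i => 'I_(k i)) i)).
have leaf_inj : injective leaf by move=> i1 i2 [] E; apply: eq_from_Tagged E.
rewrite (maxn_idPl kx_gt0) -{1}(card_ord (k x)) -(card_codom leaf_inj).
apply: eq_card => o; rewrite unfold_in /partner_choice hx; apply/idP/codomP.
  case: o => [[i|[i m]]|] //=; last by rewrite eqn0Ngt kx_gt0.
  by move/eqP => ix; subst i; exists m.
by case=> m ->; rewrite /= eqxx.
Qed.

Lemma card_extends h : #|[pred f | extends h f]| = extension_count h.
Proof.
rewrite (eq_card (B := pfamily None predT (partner_choice h))); last first.
  move=> f; rewrite inE /extends; apply/all_core_verticesP/pfamilyP => [ext|[_ ext] x].
    by split; [apply/subsetP | move=> x _; rewrite unfold_in; apply: ext].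
  by have := ext x isT; rewrite unfold_in.
rewrite card_pfamily /extension_count -big_core_vertices -big_enum /=.
by rewrite /image_mem foldrE big_map; apply: eq_bigr => x _; apply: card_partner_choice.
Qed.

Lemma partner_funs_fiber (g : {ffun 'I_5 -> option 'I_5}) f :
  (f \in partner_funs) && (core_part f == g) =
  [&& is_core_matching g, admissible g & extends g f].
Proof.
rewrite inE; apply/idP/idP; first by case/andP => /and3P[cm adm ext] /eqP <-; rewrite cm adm.
case/and3P => cm adm ext.
suff fg : core_part f = g by rewrite /is_partner_funb fg cm adm ext eqxx.
apply/ffunP => x; move/all_core_verticesP: ext => /(_ x); rewrite /partner_choice ffunE.
by case: (g x) => [j /eqP -> //|]; case: (f x) => [[i|l]|].
Qed.

Lemma sum_partner_funs (F : {ffun 'I_5 -> option 'I_5} -> nat) :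
  \sum_(f in partner_funs) F (core_part f) =
  \sum_(g : {ffun 'I_5 -> option 'I_5})
     is_core_matching g * (admissible g * (F g * extension_count g)).
Proof.
rewrite (partition_big core_part predT) //=; apply: eq_bigr => g _.
rewrite (eq_bigr (fun=> F g)) => [|f /andP[_ /eqP ->] //].
rewrite (eq_bigl [pred f | [&& is_core_matching g, admissible g & extends g f]]);
  last by move=> f; rewrite partner_funs_fiber inE.
rewrite sum_nat_const.
case: (is_core_matching g); last by rewrite eq_card0.
case: (admissible g); last by rewrite eq_card0.
by rewrite !mul1n card_extends mulnC.
Qed.
End Counting.

Definition of_seq (t : seq (option 'I_5)) (x : 'I_5) : option 'I_5 := nth None t x.

Fixpoint option_seqs n : seq (seq (option 'I_5)) :=
  if n is n'.+1 then [seq x :: t | x <- None :: map Some core_vertices, t <- option_seqs n']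
  else [:: [::]].

Lemma mem_option_seqs t : t \in option_seqs (size t).
Proof.
elim: t => [|x t IHt] //; apply: (allpairs_f (fun x t => x :: t)) IHt.
case: x => [x|]; rewrite inE // map_f ?orbT //; exact: mem_core_vertices.
Qed.

(* The empty matching, the six edges and the five pairs of disjoint edges. *)
Definition core_matchings : seq (seq (option 'I_5)) :=
  let: (o0, o1, o2, o3, o4) := (Some (@Ordinal 5 0 isT), Some (@Ordinal 5 1 isT),
    Some (@Ordinal 5 2 isT), Some (@Ordinal 5 3 isT), Some (@Ordinal 5 4 isT)) in
  [:: [:: None; None; None; None; None];
      [:: o1; o0; None; None; None];
      [:: o2; None; o0; None; None];
      [:: None; o2; o1; None; None];
      [:: o3; None; None; o0; None];
      [:: o4; None; None; None; o0];
      [:: None; None; None; o4; o3];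
      [:: None; o2; o1; o4; o3];
      [:: o3; o2; o1; o0; None];
      [:: o4; o2; o1; None; o0];
      [:: o1; o0; None; o4; o3];
      [:: o2; None; o0; o4; o3]].

Lemma core_matchings_complete :
  all (fun t => is_core_matching (of_seq t) ==> (t \in core_matchings)) (option_seqs 5).
Proof. by vm_compute. Qed.

Lemma core_matchings_sound :
  all (fun t => is_core_matching (of_seq t) && (size t == 5)) core_matchings &&
  uniq core_matchings.
Proof. by vm_compute. Qed.

Lemma is_core_matching_ext h h' : h =1 h' -> is_core_matching h = is_core_matching h'.
Proof. by move=> hh'; apply: eq_all => x; apply: eq_all => j; rewrite !hh'. Qed.

Definition ffun_of_seq t : {ffun 'I_5 -> option 'I_5} := [ffun x => of_seq t x].

Lemma ffun_of_seq_map (g : {ffun 'I_5 -> option 'I_5}) :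
  ffun_of_seq (map g core_vertices) = g.
Proof.
apply/ffunP => x; rewrite ffunE /of_seq (nth_map x); last by case: x.
by case: x => [[|[|[|[|[|m]]]]] Hm] //; congr (g _); apply/val_inj.
Qed.

Lemma is_core_matchingE (g : {ffun 'I_5 -> option 'I_5}) :
  is_core_matching g = (g \in map ffun_of_seq core_matchings).
Proof.
apply/idP/mapP => [cm|[t tcm ->]].
  exists (map g core_vertices); last by rewrite ffun_of_seq_map.
  have := allP core_matchings_complete _ (mem_option_seqs (map g core_vertices)).
  rewrite -(is_core_matching_ext (h := g)) ?cm // => x.
  by rewrite -{1}(ffun_of_seq_map g) ffunE.
case/andP: core_matchings_sound => /allP/(_ t tcm)/andP[cm _] _.
by rewrite (is_core_matching_ext (h' := of_seq t)) // => x; rewrite ffunE.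
Qed.

Lemma sum_core_matchings (Phi : ('I_5 -> option 'I_5) -> nat) :
  (forall h h', h =1 h' -> Phi h = Phi h') ->
  \sum_(g : {ffun 'I_5 -> option 'I_5}) is_core_matching g * Phi g =
  \sum_(t <- core_matchings) Phi (of_seq t).
Proof.
move=> Phi_ext; rewrite (eq_bigr (fun g : {ffun 'I_5 -> option 'I_5} =>
  if is_core_matching g then Phi g else 0)); last first.
  by move=> g _; case: (is_core_matching g); rewrite ?mul1n.
rewrite -big_mkcond (eq_bigl (mem (map ffun_of_seq core_matchings))) => [|g];
  last exact: is_core_matchingE.
case/andP: core_matchings_sound => /allP sound uniq_cm.
rewrite -big_uniq; last first.
  rewrite map_inj_in_uniq // => t1 t2 /sound/andP[_ /eqP s1] /sound/andP[_ /eqP s2] t12.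
  apply: (@eq_from_nth _ None); first by rewrite s1 s2.
  move=> i; rewrite s1 => i5.
  by have := congr1 (fun g : {ffun 'I_5 -> option 'I_5} => g (Ordinal i5)) t12; rewrite !ffunE.
by rewrite big_map; apply: eq_bigr => t _; apply: Phi_ext => x; rewrite ffunE.
Qed.

Section Formulas.
Variable k : 'I_5 -> nat.

Lemma admissible_ext h h' : h =1 h' -> admissible k h = admissible k h'.
Proof. by move=> hh'; apply: eq_all => x; apply: eq_all => j; rewrite !hh'. Qed.

Lemma extension_size_ext h h' : h =1 h' -> extension_size k h = extension_size k h'.
Proof. by move=> hh'; apply: eq_bigr => x _; rewrite /contributes hh'. Qed.

Lemma extension_count_ext h h' : h =1 h' -> extension_count k h = extension_count k h'.
Proof. by move=> hh'; apply: eq_bigr => x _; rewrite /leaf_weight hh'. Qed.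

Definition maximal_count : nat :=
  \sum_(t <- core_matchings) admissible k (of_seq t) * extension_count k (of_seq t).

Definition maximal_size_sum : nat :=
  \sum_(t <- core_matchings)
    admissible k (of_seq t) * (extension_size k (of_seq t) * extension_count k (of_seq t)).

Lemma card_maximal_matchings : #|maximal_matchings (@pend_rel k)| = maximal_count.
Proof.
rewrite maximal_matchingsE card_in_imset; last exact: matching_of_inj.
rewrite -sum1_card (sum_partner_funs k (fun=> 1)) (sum_core_matchings
  (Phi := fun h => admissible k h * (1 * extension_count k h))); last first.
  by move=> h h' hh'; rewrite (admissible_ext hh') (extension_count_ext hh').
by apply: eq_bigr => t _; rewrite mul1n.
Qed.

Lemma sum_card_maximal_matchings :
  \sum_(M in maximal_matchings (@pend_rel k)) #|M| = maximal_size_sum.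
Proof.
rewrite maximal_matchingsE big_imset /=; last exact: matching_of_inj.
rewrite (eq_bigr (fun f => extension_size k (core_part f))); last first.
  by move=> f; rewrite inE => /card_matching_of.
rewrite (sum_partner_funs k (extension_size k)) (sum_core_matchings
  (Phi := fun h => admissible k h * (extension_size k h * extension_count k h))) //.
move=> h h' hh'.
by rewrite (admissible_ext hh') (extension_size_ext hh') (extension_count_ext hh').
Qed.

End Formulas.

(* Ways to complete the triangle [u v1 v2] when [u] is matched to one of its
   leaves: take the edge [v1 v2], or, provided some leaf hangs there, match
   each of [v1], [v2] that has leaves to one of them. *)
Definition side_count (x y : nat) : nat := 1 + (0 < x + y) * (maxn x 1 * maxn y 1).

Definition side_size (x y : nat) : nat :=
  1 + (0 < x + y) * (maxn x 1 * maxn y 1 * ((0 < x) + (0 < y))).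

Lemma side_count_le_size x y : side_count x y <= side_size x y.
Proof.
rewrite leq_add2l; case: posnP => //= xy; rewrite !mul1n leq_pmulr //.
by case: x y xy => [|x] [|y].
Qed.

Lemma leaf_weights_lt x y : 0 < x + y ->
  maxn x 1 + maxn y 1 < 3 * ((0 < x) * maxn x 1 + (0 < y) * maxn y 1).
Proof. by case: x y => [|x] [|y] //= _; rewrite /maxn /=; lia. Qed.

Section Bowtie.
Variables a b1 b2 c1 c2 : nat.
Local Notation k := (leafcount a.+1 b1 b2 c1 c2).

(* Grouped by the partner of [u]: a leaf, a vertex of the triangle [u v1 v2]
   (the other one then takes a leaf if it has any, and [u w1 w2] is completed
   as in [side_count]), or a vertex of [u w1 w2]. *)
Lemma maximal_count_bowtie :
  maximal_count k =
  a.+1 * side_count b1 b2 * side_count c1 c2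
  + (maxn b1 1 + maxn b2 1) * side_count c1 c2
  + (maxn c1 1 + maxn c2 1) * side_count b1 b2.
Proof.
rewrite /maximal_count /admissible /extension_count /leaf_weight /leafcount /side_count.
rewrite unlock /=.
by case: b1 b2 c1 c2 => [|?] [|?] [|?] [|?]; rewrite /maxn /=; ring.
Qed.

Lemma maximal_size_sum_bowtie :
  maximal_size_sum k =
  a.+1 * (side_count b1 b2 * side_count c1 c2 + side_size b1 b2 * side_count c1 c2
          + side_count b1 b2 * side_size c1 c2)
  + maxn b2 1 * ((0 < b2).+1 * side_count c1 c2 + side_size c1 c2)
  + maxn b1 1 * ((0 < b1).+1 * side_count c1 c2 + side_size c1 c2)
  + maxn c2 1 * ((0 < c2).+1 * side_count b1 b2 + side_size b1 b2)
  + maxn c1 1 * ((0 < c1).+1 * side_count b1 b2 + side_size b1 b2).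
Proof.
rewrite /maximal_size_sum /admissible /extension_size /extension_count /contributes.
rewrite /leaf_weight /leafcount /side_count /side_size unlock /=.
by case: b1 b2 c1 c2 => [|?] [|?] [|?] [|?]; rewrite /maxn /=; ring.
Qed.

Lemma bowtie_count_size_lt : 0 < b1 + b2 + c1 + c2 ->
  7 * maximal_count k < 3 * maximal_size_sum k.
Proof.
move=> leaves; rewrite maximal_count_bowtie maximal_size_sum_bowtie.
(* What remains of the claim once [side_size] is bounded below by [side_count]. *)
have reduced :
  (maxn b1 1 + maxn b2 1) * side_count c1 c2 + (maxn c1 1 + maxn c2 1) * side_count b1 b2 <
  2 * a.+1 * side_count b1 b2 * side_count c1 c2
  + 3 * ((0 < b1) * maxn b1 1 + (0 < b2) * maxn b2 1) * side_count c1 c2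
  + 3 * ((0 < c1) * maxn c1 1 + (0 < c2) * maxn c2 1) * side_count b1 b2.
  have [b0|bpos] := posnP (b1 + b2); have [c0|cpos] := posnP (c1 + c2).
  - by move: leaves; rewrite -addnA c0 addn0 b0.
  - move: b0 => /eqP; rewrite addn_eq0 => /andP[/eqP-> /eqP->].
    by have := leaf_weights_lt cpos; rewrite (_ : side_count 0 0 = 1) //; nia.
  - move: c0 => /eqP; rewrite addn_eq0 => /andP[/eqP-> /eqP->].
    by have := leaf_weights_lt bpos; rewrite (_ : side_count 0 0 = 1) //; nia.
  - have := leaf_weights_lt bpos; have := leaf_weights_lt cpos.
    have V0 : 0 < side_count b1 b2 by []; have W0 : 0 < side_count c1 c2 by [].
    nia.
have hV := side_count_le_size b1 b2; have hW := side_count_le_size c1 c2.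
move: reduced hV hW.
set V := side_count b1 b2; set W := side_count c1 c2.
set V' := side_size b1 b2; set W' := side_size c1 c2.
clearbody V W V' W' => reduced hV hW.
apply: (@leq_trans (3 * (a.+1 * (V * W + V * W + V * W)
  + maxn b2 1 * ((0 < b2).+1 * W + W) + maxn b1 1 * ((0 < b1).+1 * W + W)
  + maxn c2 1 * ((0 < c2).+1 * V + V) + maxn c1 1 * ((0 < c1).+1 * V + V)))); last first.
  by do ![exact: leqnn | apply: leq_add | apply: leq_mul].
lia.
Qed.

End Bowtie.

Lemma maximal_count_R33 m : maximal_count (leafcount 0 m.+1 0 0 0) = 3 * m.+1 + 4.
Proof.
rewrite /maximal_count /admissible /extension_count /leaf_weight /leafcount.
by rewrite unlock /maxn /=; ring.
Qed.

Lemma maximal_size_sum_R33 m : maximal_size_sum (leafcount 0 m.+1 0 0 0) = 7 * m.+1 + 8.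
Proof.
rewrite /maximal_size_sum /admissible /extension_size /extension_count /contributes.
by rewrite /leaf_weight /leafcount unlock /maxn /=; ring.
Qed.

Lemma avmE (k : 'I_5 -> nat) :
  avm (@pend_rel k) = ((maximal_size_sum k)%:R / (maximal_count k)%:R)%R.
Proof. by rewrite /avm sum_card_maximal_matchings card_maximal_matchings. Qed.

Lemma ratio_lt (x y z w : nat) : 0 < y -> 0 < w -> x * w < z * y ->
  (x%:R / y%:R < z%:R / w%:R :> rat)%R.
Proof.
move=> y_gt0 w_gt0 xwzy.
by rewrite ltr_pdivrMr ?ltr0n // mulrAC ltr_pdivlMr ?ltr0n // -!natrM ltr_nat.
Qed.

Lemma avm_R33_lt m : (avm (@pend_rel (leafcount 0 m.+1 0 0 0)) < 7%:R / 3%:R)%R.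
Proof.
rewrite avmE maximal_count_R33 maximal_size_sum_R33; apply: ratio_lt => //; lia.
Qed.

Lemma avm_bowtie_gt a b1 b2 c1 c2 : 0 < b1 + b2 + c1 + c2 ->
  (7%:R / 3%:R < avm (@pend_rel (leafcount a.+1 b1 b2 c1 c2)))%R.
Proof.
move=> leaves; rewrite avmE; apply: ratio_lt => //.
  by rewrite maximal_count_bowtie -addnA ltn_addr // !muln_gt0.
by rewrite [_ * 3]mulnC bowtie_count_size_lt.
Qed.

Theorem lemma3p4 (a b1 b2 c1 c2 d n : nat) :
  (1 <= a)%N ->
  d = count (fun x => 0 < x)%N [:: b1; b2; c1; c2] ->
  (1 <= d <= 4)%N ->
  n = (5 + a + b1 + b2 + c1 + c2)%N ->
  (avm (@pend_rel (R33 n)) < avm (@pend_rel (leafcount a b1 b2 c1 c2)))%R.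
Proof.
case: a => [//|a] _ -> d_range ->.
have leaves : 0 < b1 + b2 + c1 + c2 by move: d_range => /=; lia.
have -> : R33 (5 + a.+1 + b1 + b2 + c1 + c2) = leafcount 0 (a + b1 + b2 + c1 + c2).+1 0 0 0.
  by rewrite /R33; congr leafcount; lia.
exact: lt_trans (avm_R33_lt _) (avm_bowtie_gt a leaves).
Qed.
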